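(* Let $p\equiv1\pmod5$ be prime and let $\psi$ be a character of order $5$ of $\mathbb{F}_p^*$. If $a,b,c\in\mathbb{Z}$ satisfy $a+c\not\equiv0\pmod5$ and $b+c\not\equiv0\pmod5$, then \[ \sum_{\chi}\chi(-1)\,J(\bar\chi\psi^a,\bar\chi\psi^b,\chi\psi^c)=-(p-1), \] where the sum runs over all multiplicative characters $\chi$ of $\mathbb{F}_p^*$.
   Context: Multiplicative characters of $\mathbb{F}_p^*$ are extended to $\mathbb{F}_p$ by $\chi(0):=0$, including for the trivial character; $\bar\chi$ denotes the inverse character. For characters $\chi_1,\dots,\chi_k$, the generalized Jacobi sum is $J(\chi_1,\dots,\chi_k):=\sum_{t_1+\dots+t_k=1,\ t_i\in\mathbb{F}_p}\chi_1(t_1)\cdots\chi_k(t_k)$. *)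

From HB Require Import structures.
From mathcomp Require Import all_boot all_order all_algebra all_field.
Set Implicit Arguments. Unset Strict Implicit. Unset Printing Implicit Defensive.
Import Order.TTheory GRing.Theory Num.Theory.
Local Open Scope ring_scope.

(* Multiplicative characters of F_p^*, extended to F_p by chi(0) := 0
   (also for the trivial character), with values in algC. *)
Definition is_mchar (p : nat) (chi : 'F_p -> algC) : Prop :=
  [/\ chi 0 = 0, chi 1 = 1 & forall x y, chi (x * y) = chi x * chi y].

Definition mchar_order (p : nat) (psi : 'F_p -> algC) (n : nat) : Prop :=
  [/\ (0 < n)%N,
      (forall t : 'F_p, t != 0 -> psi t ^+ n = 1) &
      (forall m : nat, (0 < m < n)%N -> exists2 t : 'F_p, t != 0 & psi t ^+ m != 1)].

Definition chmul (p : nat) (chi phi : 'F_p -> algC) : 'F_p -> algC :=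
  fun t => chi t * phi t.

Definition chpow (p : nat) (chi : 'F_p -> algC) (a : int) : 'F_p -> algC :=
  fun t => if t == 0 then 0 else chi t ^ a.

Definition chinv (p : nat) (chi : 'F_p -> algC) : 'F_p -> algC :=
  fun t => if t == 0 then 0 else (chi t)^-1.

Definition jacobi3 (p : nat) (c1 c2 c3 : 'F_p -> algC) : algC :=
  \sum_(t1 : 'F_p) \sum_(t2 : 'F_p) c1 t1 * c2 t2 * c3 (1 - t1 - t2).

From HB Require Import structures.
From mathcomp Require Import all_boot all_order all_algebra all_field all_fingroup all_solvable.
From mathcomp Require Import ring zify.
Import Order.TTheory GRing.Theory Num.Theory.
Local Open Scope ring_scope.
Set Implicit Arguments. Unset Strict Implicit. Unset Printing Implicit Defensive.

(* Orthogonality of characters collapses the sum over chi to (p - 1) times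
   the sum of psi^a(t1) psi^b(t2) psi^c(t3) over t1 + t2 + t3 = 1 with
   t1 t2 = -t3, i.e. (t1 - 1)(t2 - 1) = 0.  On the line t1 = 1 the terms are
   psi^(b+c)(t2), on the line t2 = 1 they are psi^(a+c)(t1) (using
   psi(-1) = 1, as psi has odd order), and both full sums vanish because
   5 divides neither b + c nor a + c; only the double point (1, 1),
   counted once instead of twice, survives and contributes -1. *)

Lemma mul_eq_opp_1BB (R : idomainType) (x y : R) :
  (x * y == - (1 - x - y)) = (x == 1) || (y == 1).
Proof.
have -> : (x * y == - (1 - x - y)) = ((x - 1) * (y - 1) == 0).
  by rewrite -subr_eq0 opprK; congr (_ == 0); ring.
by rewrite mulf_eq0 !subr_eq0.
Qed.

Section MultiplicativeCharacters.

Variable p : nat.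
Hypothesis pr_p : prime p.
Local Notation n := p.-1.

Lemma pred_prime_gt0 : (0 < n)%N.
Proof. by rewrite -ltnS prednK ?prime_gt0 ?prime_gt1. Qed.

Lemma Fp_expf_pred (x : 'F_p) : x != 0 -> x ^+ n = 1.
Proof.
move=> xnz; apply: (mulfI xnz); rewrite mulr1 -exprS prednK ?prime_gt0 //.
by have := expf_card x; rewrite card_Fp.
Qed.

Lemma Fp_prim_root_exists : {g : 'F_p | n.-primitive_root g}.
Proof.
have : has n.-primitive_root (enum (predC1 (0 : 'F_p))).
  apply: has_prim_root; first exact: pred_prime_gt0.
  - by apply/allP => x; rewrite mem_enum /= unity_rootE => /Fp_expf_pred ->.
  - exact: enum_uniq.
  - by rewrite -cardE cardC1 card_Fp.
by move/hasP/sig2_eqW => [g _ Hg]; exists g.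
Qed.

Definition Fp_gen := sval Fp_prim_root_exists.
Lemma Fp_genP : n.-primitive_root Fp_gen.
Proof. exact: svalP Fp_prim_root_exists. Qed.
Local Notation g := Fp_gen.

Lemma Fp_gen_neq0 : g != 0.
Proof.
apply/eqP => g0; have := prim_expr_order Fp_genP.
by rewrite g0 expr0n gtn_eqF ?pred_prime_gt0 // => /eqP; rewrite eq_sym oner_eq0.
Qed.

Definition zeta := sval (C_prim_root_exists pred_prime_gt0).
Lemma zetaP : n.-primitive_root zeta.
Proof. exact: svalP (C_prim_root_exists pred_prime_gt0). Qed.

Definition dlog (t : 'F_p) : nat := find (fun i => g ^+ i == t) (iota 0 n).

Lemma dlogP t : t != 0 -> (dlog t < n)%N /\ g ^+ dlog t = t.
Proof.
move=> tnz; have [i ->] := prim_rootP Fp_genP (Fp_expf_pred tnz).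
have hs : has (fun j => g ^+ j == g ^+ i) (iota 0 n).
  by apply/hasP; exists (val i); rewrite ?mem_iota //=.
have lt : (dlog (g ^+ i) < n)%N.
  by have := has_find (fun j => g ^+ j == g ^+ i) (iota 0 n); rewrite hs size_iota.
by split=> //; have /eqP := nth_find 0%N hs; rewrite nth_iota ?add0n.
Qed.

Lemma dlog_exp i : dlog (g ^+ i) = (i %% n)%N.
Proof.
have [lt e] := dlogP (expf_neq0 i Fp_gen_neq0).
by move/eqP: e; rewrite (eq_prim_root_expr Fp_genP) modn_small // => /eqP.
Qed.

Lemma dlog1 : dlog 1 = 0%N.
Proof. by rewrite -(expr0 g) dlog_exp mod0n. Qed.

Lemma dlogM x y : x != 0 -> y != 0 -> dlog (x * y) = (dlog x + dlog y)%[mod n].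
Proof.
move=> xnz ynz; have [_ ex] := dlogP xnz; have [_ ey] := dlogP ynz.
have [_ exy] := dlogP (mulf_neq0 xnz ynz).
by apply/eqP; rewrite -(eq_prim_root_expr Fp_genP) exprD ex ey exy.
Qed.

Definition gen_mchar (k : nat) (t : 'F_p) : algC :=
  if t == 0 then 0 else zeta ^+ (k * dlog t).

Lemma gen_mchar_is_mchar k : is_mchar (gen_mchar k).
Proof.
split; first by rewrite /gen_mchar eqxx.
  by rewrite /gen_mchar oner_eq0 dlog1 muln0.
move=> x y; rewrite /gen_mchar mulf_eq0.
have [_|xnz] := eqVneq x 0; first by rewrite mul0r.
have [_|ynz] := eqVneq y 0; first by rewrite mulr0.
rewrite -exprD; apply/eqP; rewrite (eq_prim_root_expr zetaP) -mulnDr.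
by rewrite -modnMmr dlogM // modnMmr.
Qed.

Lemma mcharX (chi : 'F_p -> algC) x m : is_mchar chi -> chi (x ^+ m) = chi x ^+ m.
Proof.
case=> _ h1 hM; elim: m => [|m IH]; first by rewrite !expr0.
by rewrite !exprS hM IH.
Qed.

Lemma mchar_gen_mchar (chi : 'F_p -> algC) : is_mchar chi ->
  exists2 k, (k < n)%N & chi =1 gen_mchar k.
Proof.
move=> hc; have [h0 h1 _] := hc.
have : chi g ^+ n = 1 by rewrite -mcharX // prim_expr_order ?Fp_genP.
move/(prim_rootP zetaP) => [i ei]; exists (val i) => [|t]; first exact: ltn_ord.
rewrite /gen_mchar; have [->|tnz] := eqVneq t 0 => //.
by have [_ e] := dlogP tnz; rewrite -{1}e mcharX // ei -exprM.
Qed.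

Definition gen_mcharf k : {ffun 'F_p -> algC} := [ffun t => gen_mchar k t].

Lemma gen_mcharf_inj i j : (i < n)%N -> (j < n)%N -> gen_mcharf i = gen_mcharf j -> i = j.
Proof.
move=> hi hj /ffunP /(_ g); rewrite !ffunE /gen_mchar (negbTE Fp_gen_neq0).
rewrite -(expr1 g) dlog_exp.
by move/eqP; rewrite (eq_prim_root_expr zetaP) !modnMmr !muln1 !modn_small // => /eqP.
Qed.

Lemma eq_is_mchar (f f' : 'F_p -> algC) : f =1 f' -> is_mchar f -> is_mchar f'.
Proof. by move=> e [h0 h1 hM]; split; rewrite -?e // => x y; rewrite -!e. Qed.

Lemma mcharV (chi : 'F_p -> algC) x : is_mchar chi -> x != 0 -> chi x^-1 = (chi x)^-1.
Proof.
move=> [_ h1 hM] xnz; have e : chi x * chi x^-1 = 1 by rewrite -hM mulfV.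
by rewrite (mulr1_eq e).
Qed.

Variable s : seq {ffun 'F_p -> algC}.
Hypothesis s_uniq : uniq s.
Hypothesis s_all : forall chi : {ffun 'F_p -> algC}, chi \in s <-> is_mchar chi.

Lemma mchars_perm : perm_eq s [seq gen_mcharf k | k <- iota 0 n].
Proof.
apply: uniq_perm => //.
  rewrite map_inj_in_uniq ?iota_uniq // => i j; rewrite !mem_iota !add0n.
  by move=> /andP[_ hi] /andP[_ hj]; apply: gen_mcharf_inj.
move=> chi; apply/idP/idP => [/s_all hc | /mapP [k hk ->]].
  have [k hk e] := mchar_gen_mchar hc; apply/mapP; exists k; first by rewrite mem_iota.
  by apply/ffunP => t; rewrite ffunE e.
by apply/s_all/(eq_is_mchar _ (gen_mchar_is_mchar k)) => t; rewrite ffunE.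
Qed.

Lemma big_mchars (F : {ffun 'F_p -> algC} -> algC) :
  \sum_(chi <- s) F chi = \sum_(k < n) F (gen_mcharf k).
Proof. by rewrite (perm_big _ mchars_perm) big_map -[n in iota 0 n]subn0 big_mkord. Qed.

Lemma sum_mchar y : y != 0 -> \sum_(chi <- s) chi y = if y == 1 then n%:R else 0.
Proof.
move=> ynz; rewrite big_mchars.
under eq_bigr => k _ do rewrite ffunE /gen_mchar (negbTE ynz) mulnC exprM.
have [->|y1] := eqVneq y 1.
  rewrite dlog1.
  by under eq_bigr => k _ do rewrite expr0 expr1n; rewrite sumr_const card_ord.
set w := zeta ^+ dlog y.
have wn : w ^+ n = 1 by rewrite -exprM mulnC exprM (prim_expr_order zetaP) expr1n.
have w1 : w != 1.
  rewrite -(prim_order_dvd zetaP); have [lt e] := dlogP ynz.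
  rewrite gtnNdvd // lt0n; apply: contra_neq y1 => d0.
  by rewrite -e d0 expr0.
(* w is an n-th root of unity other than 1, so its powers sum to 0. *)
have := subrX1 w n; rewrite wn subrr => /esym/eqP; rewrite mulf_eq0 subr_eq0.
by rewrite (negbTE w1) /= => /eqP.
Qed.

Lemma sum_mchar_prod3 x1 x2 x3 :
  \sum_(chi <- s) chi (-1) * chinv chi x1 * chinv chi x2 * chi x3
  = if [&& x1 != 0, x2 != 0 & x1 * x2 == - x3] then n%:R else 0.
Proof.
have hs (chi : {ffun 'F_p -> algC}) : chi \in s -> is_mchar chi by move/s_all.
have [->|x1nz] /= := eqVneq x1 0.
  by rewrite big1_seq // => chi _; rewrite /chinv eqxx mulr0 !mul0r.
have [->|x2nz] /= := eqVneq x2 0.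
  by rewrite big1_seq // => chi _; rewrite /chinv eqxx mulr0 !mul0r.
have [->|x3nz] := eqVneq x3 0.
  rewrite oppr0 mulf_eq0 (negbTE x1nz) (negbTE x2nz) /=.
  by rewrite big1_seq // => chi /hs [h0 _ _]; rewrite h0 mulr0.
have m0 : x1 * x2 != 0 by rewrite mulf_neq0.
set y := - x3 / (x1 * x2).
have ynz : y != 0 by rewrite mulf_neq0 ?invr_eq0 // oppr_eq0.
rewrite (eq_big_seq (fun chi : {ffun 'F_p -> algC} => chi y)); last first.
  move=> chi /hs hc; have [_ _ hM] := hc.
  have -> : y = -1 * x1^-1 * x2^-1 * x3 by rewrite /y invfM; ring.
  by rewrite /chinv (negbTE x1nz) (negbTE x2nz) !hM !mcharV.
rewrite sum_mchar //; congr (if _ then _ else _); apply/eqP/eqP => h.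
  by rewrite -[RHS](divfK m0) -/y h mul1r.
by rewrite /y -h divff.
Qed.

End MultiplicativeCharacters.

Section CharacterOfFiniteOrder.

Variables (p k : nat) (psi : 'F_p -> algC).
Hypothesis hpsi : is_mchar psi.
Hypothesis hord : mchar_order psi k.

Lemma mchar_order_unit t : t != 0 -> psi t \is a GRing.unit.
Proof.
move=> tnz; have [k_gt0 hk _] := hord; rewrite unitfE; apply: contra_eq_neq (hk t tnz).
by move->; rewrite expr0n gtn_eqF // eq_sym oner_eq0.
Qed.

Lemma mchar_odd_orderN1 : odd k -> psi (-1) = 1.
Proof.
have [_ hk _] := hord; have [_ h1 hM] := hpsi.
have e2 : psi (-1) ^+ 2 = 1 by rewrite expr2 -hM mulN1r opprK.
move=> k_odd; rewrite -[RHS](hk (-1)) ?oppr_eq0 ?oner_eq0 //.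
by rewrite -(odd_double_half k) k_odd -muln2 exprS mulnC exprM e2 expr1n mulr1.
Qed.

Lemma sum_chpow_eq0 (m : int) : ~~ (k%:Z %| m)%Z -> \sum_t chpow psi m t = 0.
Proof.
move=> ndvd; have [k_gt0 hk hmin] := hord; have [_ _ hM] := hpsi.
have [t0 t0nz psim] : exists2 t0 : 'F_p, t0 != 0 & psi t0 ^ m != 1.
  have kz : 0 < k%:Z by rewrite ltz_nat.
  have rnz : (m %% k)%Z != 0 by apply: contra ndvd => /eqP /dvdz_mod0P.
  have r0 := modz_ge0 m (lt0r_neq0 kz); have rk := ltz_pmod m kz.
  case Er: (m %% k)%Z r0 rk rnz => [r|r] // _ rk rnz.
  have [t0 t0nz ht0] : exists2 t0 : 'F_p, t0 != 0 & psi t0 ^+ r != 1.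
    by apply: hmin; lia.
  exists t0 => //; rewrite (divz_eq m k) Er exprzDr ?mchar_order_unit //.
  by rewrite (mulrC _ k%:Z) -exprz_exp -exprnP hk // exp1rz mul1r -exprnP.
(* Multiplying the variable by t0 permutes the sum and scales it by psi(t0)^m. *)
have e : \sum_t chpow psi m t = psi t0 ^ m * \sum_t chpow psi m t.
  rewrite [LHS](reindex_inj (mulfI t0nz)) mulr_sumr; apply: eq_bigr => t _.
  rewrite /chpow mulf_eq0 (negbTE t0nz) /=.
  have [_|tnz] := eqVneq t 0; first by rewrite mulr0.
  by rewrite hM exprzMl ?mchar_order_unit.
move/eqP: e; rewrite -[X in X == _]mul1r -subr_eq0 -mulrBl mulf_eq0 subr_eq0 eq_sym.
by rewrite (negbTE psim) /= => /eqP.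
Qed.

Lemma chpow1 (m : int) : chpow psi m 1 = 1.
Proof. by have [_ h1 _] := hpsi; rewrite /chpow oner_eq0 h1 exp1rz. Qed.

Lemma chpowMN (u v : int) t : odd k ->
  chpow psi u t * chpow psi v (- t) = chpow psi (u + v) t.
Proof.
move=> k_odd; have [_ _ hM] := hpsi; rewrite /chpow oppr_eq0.
have [_|tnz] := eqVneq t 0; first by rewrite mul0r.
by rewrite -mulN1r hM mchar_odd_orderN1 // mul1r exprzDr ?mchar_order_unit.
Qed.

Lemma sum_chpow3_on_lines (a b c : int) : odd k ->
  ~~ (k%:Z %| a + c)%Z -> ~~ (k%:Z %| b + c)%Z ->
  \sum_(t1 : 'F_p) \sum_(t2 : 'F_p)
    (if [&& t1 != 0, t2 != 0 & t1 * t2 == - (1 - t1 - t2)]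
     then chpow psi a t1 * chpow psi b t2 * chpow psi c (1 - t1 - t2) else 0) = -1.
Proof.
move=> k_odd hac hbc.
under eq_bigr => t1 _ do under eq_bigr => t2 _ do rewrite mul_eq_opp_1BB.
have chpow0 (m : int) : chpow psi m 0 = 0 by rewrite /chpow eqxx.
have line1 : \sum_(t2 : 'F_p)
    (if [&& (1 : 'F_p) != 0, t2 != 0 & ((1 : 'F_p) == 1) || (t2 == 1)]
     then chpow psi a 1 * chpow psi b t2 * chpow psi c (1 - 1 - t2) else 0) = 0.
  rewrite -[RHS](sum_chpow_eq0 hbc); apply: eq_bigr => t2 _.
  rewrite oner_eq0 eqxx orTb andbT subrr sub0r chpow1 mul1r chpowMN //.
  by have [->|] := eqVneq t2 0; rewrite ?chpow0.
have line2 t1 : t1 != 1 -> \sum_(t2 : 'F_p)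
    (if [&& t1 != 0, t2 != 0 & (t1 == 1) || (t2 == 1)]
     then chpow psi a t1 * chpow psi b t2 * chpow psi c (1 - t1 - t2) else 0)
    = chpow psi (a + c) t1.
  move=> t1_neq1; rewrite (bigD1 1) //= big1 => [|t2 t21]; last first.
    by rewrite (negbTE t1_neq1) (negbTE t21) !andbF.
  rewrite eqxx orbT andbT addr0 chpow1 mulr1.
  rewrite (_ : 1 - t1 - 1 = - t1); last by rewrite addrAC subrr add0r.
  by have [->|] := eqVneq t1 0; rewrite ?chpow0 ?mul0r //= chpowMN.
rewrite (bigD1 1) //= line1 add0r.
under eq_bigr => t1 t1_neq1 do rewrite line2 //.
have /eqP := sum_chpow_eq0 hac; rewrite (bigD1 1) //= chpow1.
by rewrite addrC addr_eq0 => /eqP.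
Qed.

End CharacterOfFiniteOrder.

Theorem lemma2p2 (p : nat) (pr_p : prime p) (hp : (p %% 5 = 1)%N)
  (psi : 'F_p -> algC) (hpsi : is_mchar psi) (hord : mchar_order psi 5)
  (a b c : int) (hac : ~~ (5 %| a + c)%Z) (hbc : ~~ (5 %| b + c)%Z)
  (s : seq {ffun 'F_p -> algC}) (s_uniq : uniq s)
  (s_all : forall chi : {ffun 'F_p -> algC}, chi \in s <-> is_mchar chi) :
  \sum_(chi <- s)
     chi (-1) * jacobi3 (chmul (chinv chi) (chpow psi a))
                        (chmul (chinv chi) (chpow psi b))
                        (chmul chi (chpow psi c))
  = - (p.-1)%:R.
Proof.
rewrite /jacobi3 /chmul.
transitivity (\sum_(chi <- s) \sum_(t1 : 'F_p) \sum_(t2 : 'F_p)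
   (chpow psi a t1 * chpow psi b t2 * chpow psi c (1 - t1 - t2)) *
   (chi (-1) * chinv chi t1 * chinv chi t2 * chi (1 - t1 - t2))).
  apply: eq_bigr => chi _; rewrite mulr_sumr; apply: eq_bigr => t1 _.
  by rewrite mulr_sumr; apply: eq_bigr => t2 _; ring.
transitivity (\sum_(t1 : 'F_p) \sum_(t2 : 'F_p)
    (if [&& t1 != 0, t2 != 0 & t1 * t2 == - (1 - t1 - t2)]
     then chpow psi a t1 * chpow psi b t2 * chpow psi c (1 - t1 - t2) else 0)
    * (p.-1)%:R).
  rewrite exchange_big; apply: eq_bigr => t1 _; rewrite exchange_big.
  apply: eq_bigr => t2 _; rewrite -mulr_sumr (sum_mchar_prod3 pr_p s_uniq s_all).
  by case: ifP; rewrite ?mulr0 ?mul0r.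
under eq_bigr => t1 _ do rewrite -big_distrl.
by rewrite -big_distrl /= (sum_chpow3_on_lines hpsi hord) ?mulN1r.
Qed.
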